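(* For $n\geq 2$ let $h_n$ be the number of ordered pairs of words $(w,z)$ over the alphabet $\{A,B,C,D\}$ satisfying: (i) both $w$ and $z$ start with the letter $A$, and $|w|+|z|=n$; (ii) $w$ and $z$ contain the same number of letters $A$; (iii) neither $w$ nor $z$ contains a $CB$-factor (a letter $C$ immediately followed by a letter $B$); (iv) for all $i$, if the $i$th letter $A$ from the right in $w$ is immediately preceded by a $C$ and immediately followed by a $B$, then the $i$th segment of $z$ from the left contains a letter $B$. Let $H(x)=\sum_{n\geq 2}h_nx^n$. Then \[H(x)=\frac{x^2(1-2x)}{x^6-5x^5+14x^4-26x^3+22x^2-8x+1}.\]
   Context: A segment of a word $v$ over $\{A,B,C,D\}$ is a factor (consecutive letters) that starts with a letter $A$ and ends immediately before the next letter $A$, or at the end of $v$. The $i$th segment from the left is the one starting at the $i$th letter $A$ from the left. The words $w$ and $z$ need not have the same length. *)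

From mathcomp Require Import all_boot all_order all_algebra.
Set Implicit Arguments. Unset Strict Implicit. Unset Printing Implicit Defensive.
Import GRing.Theory Num.Theory.

Definition letter := 'I_4.
Definition lA : letter := @Ordinal 4 0 isT.
Definition lB : letter := @Ordinal 4 1 isT.
Definition lC : letter := @Ordinal 4 2 isT.
Definition lD : letter := @Ordinal 4 3 isT.

Definition word := seq letter.

Definition starts_with_A (w : word) : bool :=
  if w is x :: _ then x == lA else false.

Definition countA (w : word) : nat := count (pred1 lA) w.

Definition noCB (w : word) : bool :=
  all (fun i => ~~ ((nth lA w i == lC) && (nth lA w i.+1 == lB)))
      (iota 0 (size w).-1).

Definition posA (w : word) : seq nat :=
  [seq i <- iota 0 (size w) | nth lA w i == lA].

(* the j-th (0-based) segment of w from the left: the factor starting at the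
   (j+1)-th letter A and ending immediately before the next A, or at the end *)
Definition segment (w : word) (j : nat) : word :=
  let s := nth 0 (posA w) j in
  let e := nth (size w) (posA w) j.+1 in
  take (e - s) (drop s w).

Definition CAB_at (w : word) (p : nat) : bool :=
  [&& 0 < p, p.+1 < size w, nth lA w p.-1 == lC & nth lA w p.+1 == lB].

(* (iv): for all i (here j = i - 1, 0-based), if the i-th A from the right in w
   is preceded by C and followed by B, then the i-th segment of z from the left
   contains a B. *)
Definition cond_iv (w z : word) : bool :=
  all (fun j => CAB_at w (nth 0 (rev (posA w)) j) ==> (lB \in segment z j))
      (iota 0 (countA w)).

Definition good (w z : word) : bool :=
  [&& starts_with_A w, starts_with_A z, countA w == countA z,
      noCB w, noCB z & cond_iv w z].

Definition h (n : nat) : nat :=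
  if n < 2 then 0
  else \sum_(k < n.+1)
         #|[pred p : (k.-tuple letter * (n - k).-tuple letter)%type
             | good (tval p.1) (tval p.2)]|.

(* Coefficients of the denominator Q(x) and numerator P(x) = x^2 (1 - 2x). *)
Definition Qcoef (k : nat) : int :=
  nth 0%R [:: 1; -8; 22; -26; 14; -5; 1]%R k.
Definition Pcoef (n : nat) : int :=
  nth 0%R [:: 0; 0; 1; -2]%R n.

(* Read w from right to left and z from left to right in step, so that the
   i-th A of w from the right and the i-th segment of z from the left are
   consumed together; then all of (i)-(iv) become local conditions.  Removing
   the last segment of w and the first segment of z from a good pair leaves a
   good pair, so good pairs are exactly the pairs accepted by a finite
   automaton reading one letter at a time, alternately from rev w and from z.
   Its seven reachable states give a first-order linear system for the numbers
   of accepted pairs of each total length; eliminating six of them yields the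
   order-six recurrence with characteristic polynomial the denominator, and the
   initial values h_2, ..., h_6 give the numerator. *)

From mathcomp Require Import all_boot all_algebra zify.
Import GRing.Theory.

Set Implicit Arguments.
Unset Strict Implicit.
Unset Printing Implicit Defensive.

Lemma letterP (x : letter) : [\/ x = lA, x = lB, x = lC | x = lD].
Proof.
case: x => [[|[|[|[|m]]]] lt_m4] //;
  [apply: Or41 | apply: Or42 | apply: Or43 | apply: Or44]; exact: val_inj.
Qed.

Lemma letter_neq :
  ((lA == lB) = false) * ((lA == lC) = false) * ((lA == lD) = false) *
  ((lB == lA) = false) * ((lB == lC) = false) * ((lB == lD) = false) *
  ((lC == lA) = false) * ((lC == lB) = false) * ((lC == lD) = false) *
  ((lD == lA) = false) * ((lD == lB) = false) * ((lD == lC) = false).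
Proof. by []. Qed.

Lemma noCB_cons x s :
  noCB (x :: s) = ~~ ((x == lC) && (head lA s == lB)) && noCB s.
Proof.
rewrite /noCB; case: s => [|y s] /=; first by rewrite letter_neq andbF.
rewrite -[1]/(1 + 0) iotaDl all_map.
by congr (_ && _); apply: eq_all => i /=; rewrite add1n.
Qed.

Lemma noCB_cat s t :
  noCB (s ++ t) = [&& noCB s, noCB t & ~~ ((last lA s == lC) && (head lA t == lB))].
Proof.
elim: s => [|x s IHs] /=; first by rewrite andbT.
rewrite !noCB_cons IHs; case: s {IHs} => [|y s] /=.
  by case: (x == lC); case: (head lA t == lB); case: (noCB t).
by rewrite andbA.
Qed.

Lemma posA_cat s t : posA (s ++ t) = posA s ++ map (addn (size s)) (posA t).
Proof.
rewrite /posA size_cat iotaD filter_cat; congr (_ ++ _).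
  apply: eq_in_filter => i; rewrite mem_iota add0n => /andP[_ lt_i].
  by rewrite nth_cat lt_i.
rewrite add0n -{1}[size s]addn0 iotaDl filter_map; congr map.
by apply: eq_in_filter => i _ /=; rewrite nth_cat ltnNge leq_addr /= addKn.
Qed.

Lemma posA_nil s : lA \notin s -> posA s = [::].
Proof.
move=> sA; apply/eqP; rewrite -[_ == _]negbK -has_filter.
apply/hasP => -[i]; rewrite mem_iota add0n => /andP[_ lt_i] /eqP si.
by move: sA; rewrite -si mem_nth.
Qed.

Lemma size_posA w : size (posA w) = countA w.
Proof.
rewrite /posA size_filter /countA -{3}(mkseq_nth lA w) /mkseq count_map.
exact: eq_count.
Qed.

Lemma posA_lastA w r : lA \notin r -> posA (w ++ lA :: r) = rcons (posA w) (size w).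
Proof. by move=> rA; rewrite posA_cat -cat1s posA_cat (posA_nil rA) /= addn0 cats1. Qed.

Lemma posA_firstA v z : lA \notin v ->
  posA (lA :: v ++ z) = 0 :: map (addn (1 + size v)) (posA z).
Proof.
move=> vA; rewrite -cat1s posA_cat posA_cat (posA_nil vA) /=.
by congr (_ :: _); rewrite -map_comp; apply: eq_map => i /=; rewrite addnA.
Qed.

Lemma nth_map_addn d x0 (s : seq nat) i :
  nth (d + x0) (map (addn d) s) i = d + nth x0 s i.
Proof. by elim: s i => [|y s IHs] [|i] //=. Qed.

Lemma segment_firstA v z : lA \notin v -> head lA z == lA ->
  segment (lA :: v ++ z) 0 = lA :: v.
Proof.
move=> vA zA; rewrite /segment posA_firstA //= subn0.
case: z zA => [|y z] /= zA; first by rewrite cats0 take_size.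
by rewrite -cat1s posA_cat (eqP zA) /= add0n addn0 take_size_cat.
Qed.

Lemma segment_behead v z j : lA \notin v -> j < countA z ->
  segment (lA :: v ++ z) j.+1 = segment z j.
Proof.
move=> vA lt_j; rewrite /segment posA_firstA //=.
have -> : (size (v ++ z)).+1 = (1 + size v) + size z by rewrite size_cat add1n.
rewrite nth_map_addn (nth_map 0) ?size_posA // subnDl [X in drop X _]addnC -drop_drop.
by rewrite add1n /= drop_size_cat.
Qed.

Lemma CAB_at_lastA w r :
  CAB_at (w ++ lA :: r) (size w) = (last lA w == lC) && (head lA r == lB).
Proof.
rewrite /CAB_at size_cat /=; case: w => [|x w] //=.
rewrite -cat_cons nth_cat /= ltnSn -[size w]/((size (x :: w)).-1) nth_last /=.
rewrite -cat_rcons nth_cat size_rcons ltnn subnn nth0.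
case: r => [|y r] /=; first by rewrite letter_neq !andbF.
by have -> : (size w).+2 < (size w).+1 + (size r).+2 by lia.
Qed.

Lemma CAB_at_catl w s p : p < size w -> head lA s != lB ->
  CAB_at (w ++ s) p = CAB_at w p.
Proof.
rewrite /CAB_at size_cat; case: p => [|p] //= lt_p sB.
rewrite nth_cat (ltnW lt_p).
have [lt_p2|] := ltnP p.+2 (size w).
  by rewrite nth_cat lt_p2 (leq_trans lt_p2 (leq_addr _ _)).
rewrite leq_eqVlt ltnNge lt_p orbF => /eqP size_w.
by rewrite nth_cat -size_w ltnn subnn nth0 (negbTE sB) !andbF.
Qed.

(** * Splitting off the last segment of w and the first segment of z *)

Lemma countA_lastA w r : lA \notin r -> countA (w ++ lA :: r) = (countA w).+1.
Proof. by move=> rA; rewrite /countA count_cat /= (count_memPn rA) addn1. Qed.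

Lemma countA_firstA v z : lA \notin v -> countA (lA :: v ++ z) = (countA z).+1.
Proof. by move=> vA; rewrite /countA /= count_cat (count_memPn vA). Qed.

Lemma cond_iv_split w r v z : lA \notin r -> lA \notin v -> head lA z == lA ->
  countA w = countA z ->
  cond_iv (w ++ lA :: r) (lA :: v ++ z) =
  ((last lA w == lC) && (head lA r == lB) ==> (lB \in v)) && cond_iv w z.
Proof.
move=> rA vA zA eq_count_wz.
rewrite /cond_iv countA_lastA // posA_lastA // rev_rcons /=.
rewrite CAB_at_lastA segment_firstA // in_cons /=; congr (_ && _).
rewrite -[1]/(1 + 0) iotaDl all_map; apply: eq_in_all => j.
rewrite mem_iota add0n => lt_j /=.
set p := nth 0 (rev (posA w)) j.
have : p \in posA w by rewrite -mem_rev mem_nth // size_rev size_posA.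
rewrite mem_filter mem_iota add0n => /andP[_ /andP[_ lt_p]].
by rewrite CAB_at_catl // -[1 + j]/j.+1 segment_behead // -eq_count_wz.
Qed.

(* [good] relaxed to also admit the empty pair, using [head lA [::] = lA]. *)
Definition good0 (w z : word) : bool :=
  [&& head lA w == lA, head lA z == lA, countA w == countA z,
      noCB w, noCB z & cond_iv w z].

Lemma good0_split w r v z : lA \notin r -> lA \notin v -> head lA z == lA ->
  good0 (w ++ lA :: r) (lA :: v ++ z) =
  [&& good0 w z, noCB r, noCB v &
      ~~ [&& last lA w == lC, head lA r == lB & lB \notin v]].
Proof.
move=> rA vA zA.
rewrite /good0 countA_lastA // countA_firstA // eqSS zA /=.
have -> : head lA (w ++ lA :: r) = head lA w by case: w.
have zB : (head lA z == lB) = false by rewrite (eqP zA).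
rewrite !noCB_cat !noCB_cons noCB_cat zB !letter_neq /= !andbF !andbT.
case: (head lA w == lA) => //=; case: eqP => [eq_count_wz|] //=.
rewrite cond_iv_split //.
case: (last lA w == lC); case: (head lA r == lB); case: (lB \in v);
  by case: (noCB w); case: (noCB r); case: (noCB v); case: (noCB z); case: (cond_iv w z).
Qed.

Lemma good0_nil_left z : good0 [::] z = (z == [::]).
Proof.
case: z => [|y z] //; rewrite /good0 /=.
by case: eqP => //= ->; rewrite /countA /= eqxx.
Qed.

Lemma good0_nil_right w : good0 w [::] = (w == [::]).
Proof.
case: w => [|x w] //; rewrite /good0 /=.
by case: eqP => //= ->; rewrite /countA /= eqxx andbF.
Qed.

(** * The automaton *)

(* The automaton reads u = rev w and z alternately: in mode W it reads the
   current segment of w backwards down to its A, then in mode Z the matching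
   segment of z up to (and including) the next A.  In mode W, [rightB] says
   that the right neighbour of the next letter is B, and [noC] that it is an A
   followed by B whose z-segment has no B; each forbids a C, by (iii) resp.
   (iv).  In mode Z, [needB] says that the segment still needs a B for that
   purpose, and [lastC] that the previous letter is C.  Mode Z takes mode W on
   the remaining u as a parameter, so that accW is structural in u. *)
Definition accZ (u : word) (accW_u : word -> bool -> bool -> bool) :
    word -> bool -> bool -> bool :=
  fix accZ_u z needB lastC := match z with
  | [::] => u == [::]
  | y :: z' => if y == lA then accW_u z' needB false
               else if y == lB then ~~ lastC && accZ_u z' false false
               else if y == lC then accZ_u z' needB true
               else accZ_u z' needB false
  end.

Fixpoint accW (u z : word) (noC rightB : bool) {struct u} : bool :=
  match u with
  | [::] => false
  | x :: u' => if x == lA then accZ u' (accW u') z rightB false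
               else if x == lB then accW u' z false true
               else if x == lC then ~~ (noC || rightB) && accW u' z false false
               else accW u' z false false
  end.

Lemma accW_segment r u z noC rightB : lA \notin r ->
  accW (rev r ++ lA :: u) z noC rightB =
  [&& noCB r, ~~ ((noC || rightB) && (last lA r == lC)) &
      accZ u (accW u) z (head (if rightB then lB else lA) r == lB) false].
Proof.
elim/last_ind: r noC rightB => [|r x IHr] noC rightB.
  by move=> _ /=; rewrite ?letter_neq andbF; case: rightB.
rewrite -cats1 mem_cat mem_seq1 negb_or => /andP[rA xA].
rewrite rev_cat /= noCB_cat noCB_cons /= last_cat /= andbT.
have -> : forall d, head d (r ++ [:: x]) = if r is y :: _ then y else x.
  by case: r {IHr rA}.
case: (letterP x) xA => -> xA; rewrite ?eqxx // ?letter_neq /= IHr //.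
all: case: r {IHr rA} => [|y r] /=; rewrite ?letter_neq ?eqxx /= ?andbT ?andbF ?orbF ?orbT //.
all: by case: (noCB (y :: r)); case: (accZ u (accW u) z (y == lB) false);
  case: (last y r != lC); case: (noC || rightB).
Qed.

Lemma accZ_segment v z u accW_u needB lastC : lA \notin v -> head lA z == lA ->
  accZ u accW_u (v ++ z) needB lastC =
  [&& noCB v, ~~ (lastC && (head lA v == lB)) &
      if z is _ :: z' then accW_u z' (needB && (lB \notin v)) false else u == [::]].
Proof.
move=> + zA; elim: v needB lastC => [|y v IHv] needB lastC.
  move=> _ /=; case: z zA => [|y z] /= zA; first by rewrite ?letter_neq andbF.
  by rewrite zA ?letter_neq andbF andbT.
rewrite in_cons negb_or => /andP[yA vA] /=.
rewrite noCB_cons in_cons.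
case: (letterP y) yA => -> yA; rewrite ?eqxx // ?letter_neq /= IHv //.
all: case: v {IHv vA} => [|y' v] /=; rewrite ?letter_neq ?eqxx /= ?andbT ?andbF ?orbF ?orbT //.
all: by case: (noCB (y' :: v)); case: lastC; case: (y' != lB).
Qed.

Lemma accW_Afree r z noC rightB : lA \notin r -> accW (rev r) z noC rightB = false.
Proof.
elim/last_ind: r noC rightB => [|r x IHr] noC rightB //.
rewrite -cats1 mem_cat mem_seq1 negb_or rev_cat /= => /andP[rA xA].
by case: (letterP x) xA => -> xA; rewrite ?eqxx // ?letter_neq /= IHr ?andbF.
Qed.

Lemma split_lastA w : lA \in w -> exists w' r, w = w' ++ lA :: r /\ lA \notin r.
Proof.
elim/last_ind: w => [|w x IHw] //; rewrite -cats1 mem_cat mem_seq1.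
have [<- _|xA] := eqVneq lA x; first by exists w, [::].
rewrite orbF => wA.
have [w' [r [-> rA]]] := IHw wA; exists w', (rcons r x).
by rewrite -cats1 -catA mem_cat mem_seq1 negb_or rA.
Qed.

Lemma split_firstA z : exists v z', z = v ++ z' /\ lA \notin v /\ head lA z' == lA.
Proof.
elim: z => [|y z [v [z' [-> [vA z'A]]]]]; first by exists [::], [::].
have [-> | yA] := eqVneq y lA; first by exists [::], (lA :: v ++ z').
by exists (y :: v), z'; rewrite in_cons negb_or eq_sym yA.
Qed.

Lemma accW_good0 w z noC :
  accW (rev w) z noC false =
  [&& w != [::], good0 w (lA :: z) & ~~ (noC && (last lA w == lC))].
Proof.
move: {2}(size w).+1 (ltnSn (size w)) => n; elim: n w z noC => [|n IHn] w z noC //= lt_w.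
have [wA|wA] := boolP (lA \in w); last first.
  rewrite accW_Afree //; case: w lt_w wA => [|x w] //= _ wA.
  have xA : (x == lA) = false by apply: contraNF wA => /eqP <-; exact: mem_head.
  by rewrite /good0 /= xA.
have [w' [r [ew rA]]] := split_lastA wA; subst w.
have [v [z' [ez [vA z'A]]]] := split_firstA z; subst z.
rewrite rev_cat rev_cons cat_rcons accW_segment // accZ_segment // good0_split //.
rewrite last_cat /= orbF.
have -> : (w' ++ lA :: r != [::]) = true by case: w' {lt_w wA}.
case: z' z'A => [|y z] /= z'A.
  rewrite good0_nil_right; case: w' {lt_w wA} => [|x w'] /=.
    by case: (noCB r); case: (noCB v); case: (noC && (last lA r == lC)).
  by rewrite rev_cons; case: (rev w') => [|? ?]; rewrite /= !andbF.
rewrite (eqP z'A) IHn; last by move: lt_w; rewrite size_cat /=; lia.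
case: w' {IHn lt_w wA} => [|x w']; first by rewrite good0_nil_left /= !andbF.
by case: (good0 _ _); case: (noCB r); case: (noCB v); case: noC; case: (last lA r == lC);
  case: (last x w' == lC); case: (head lA r == lB); case: (lB \in v).
Qed.

Lemma good_accW w z :
  good w z = if z is x :: z' then (x == lA) && accW (rev w) z' false false else false.
Proof.
case: z => [|x z]; first by rewrite /good /= andbF.
rewrite accW_good0 andbT /good /good0 /=.
by case: eqP => [->|_] /=; [case: w | rewrite andbF].
Qed.

Definition letters : seq letter := [:: lA; lB; lC; lD].

Lemma mem_letters x : x \in letters.
Proof. by case: (letterP x) => ->. Qed.

Fixpoint words (k : nat) : seq word :=
  if k is k'.+1 then [seq x :: s | x <- letters, s <- words k'] else [:: [::]].

Lemma words_succ k : words k.+1 = [seq x :: s | x <- letters, s <- words k].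
Proof. by []. Qed.

Lemma mem_words k w : (w \in words k) = (size w == k).
Proof.
elim: k w => [|k IHk] w; first by case: w.
apply/allpairsP/idP => [[[x s] /= [_ sk ->]] | ].
  by rewrite /= eqSS -IHk.
case: w => [|x w] //= wk; exists (x, w); split => //; first exact: mem_letters.
by rewrite IHk.
Qed.

Lemma uniq_words k : uniq (words k).
Proof.
elim: k => [|k IHk] //=.
apply: (@allpairs_uniq _ _ _ (fun x s => x :: s) letters (words k)) => //.
by move=> [x1 s1] [x2 s2] _ _ /= [-> ->].
Qed.

Lemma big_tuple_words k (F : word -> nat) :
  \sum_(t : k.-tuple letter) F t = \sum_(w <- words k) F w.
Proof.
rewrite -(big_map (@tval k letter) xpredT F); apply/perm_big/uniq_perm.
- by rewrite map_inj_uniq ?index_enum_uniq //; exact: val_inj.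
- exact: uniq_words.
move=> w; rewrite mem_words; apply/mapP/eqP => [[t _ ->]|wk]; first exact: size_tuple.
by exists (Tuple (introT eqP wk)); rewrite ?mem_index_enum.
Qed.

Lemma card_good k m :
  #|[pred p : (k.-tuple letter * m.-tuple letter)%type | good p.1 p.2]| =
  \sum_(w <- words k) \sum_(z <- words m) good w z.
Proof.
rewrite -sum1_card big_mkcond /=.
rewrite -(pair_bigA _ (fun (t1 : k.-tuple letter) (t2 : m.-tuple letter) =>
  (good t1 t2 : nat))) /=.
rewrite -(big_tuple_words k (fun w => \sum_(z <- words m) good w z)).
by apply: eq_bigr => t1 _; rewrite -(big_tuple_words m (fun z => (good t1 z : nat))).
Qed.

Definition pairsum (F : word -> word -> nat) (n : nat) : nat :=
  \sum_(k < n.+1) \sum_(u <- words k) \sum_(z <- words (n - k)) F u z.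

Lemma eq_pairsum F G n : F =2 G -> pairsum F n = pairsum G n.
Proof.
by move=> eqFG; apply: eq_bigr => k _; apply: eq_bigr => u _; apply: eq_bigr => z _.
Qed.

Lemma pairsum0 n : pairsum (fun _ _ => 0) n = 0.
Proof. by rewrite /pairsum big1 // => k _; rewrite big1 // => u _; rewrite big1. Qed.

Lemma pairsum_consr F n : pairsum F n.+1 =
  \sum_(u <- words n.+1) F u [::] + \sum_(y <- letters) pairsum (fun u z => F u (y :: z)) n.
Proof.
rewrite /pairsum big_ord_recr addnC; congr (_ + _); last first.
  have -> : n.+1 - @ord_max n.+1 = 0 by apply: subnn.
  by apply: eq_bigr => u _; rewrite big_seq1.
rewrite exchange_big; apply: eq_bigr => k _.
have -> : n.+1 - widen_ord (leqnSn n.+1) k = (n - k).+1 by rewrite /= subSn // -ltnS.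
rewrite words_succ [RHS]exchange_big.
by apply: eq_bigr => u _; rewrite big_allpairs_dep.
Qed.

Lemma pairsum_consl F n : pairsum F n.+1 =
  \sum_(z <- words n.+1) F [::] z + \sum_(x <- letters) pairsum (fun u z => F (x :: u) z) n.
Proof.
rewrite /pairsum big_ord_recl (subn0 n.+1) big_seq1; congr (_ + _).
rewrite exchange_big; apply: eq_bigr => k _.
have -> : n.+1 - lift ord0 k = n - k by apply: subSS.
have -> : words (lift ord0 k) = words k.+1 by [].
by rewrite words_succ big_allpairs_dep.
Qed.

Lemma pairsum_revl F n : pairsum (fun u z => F (rev u) z) n = pairsum F n.
Proof.
apply: eq_bigr => k _.
rewrite -(big_map rev xpredT (fun u => \sum_(z <- words (n - k)) F u z)).
apply/perm_big/uniq_perm; rewrite ?map_inj_uniq ?uniq_words //; first exact: (can_inj revK).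
by move=> u; rewrite -{1}(revK u) (mem_map (can_inj revK)) !mem_words size_rev.
Qed.

Inductive state := SW of bool & bool | SZ of bool & bool.

Definition accepts (s : state) (u z : word) : bool :=
  match s with
  | SW noC rightB => accW u z noC rightB
  | SZ needB lastC => accZ u (accW u) z needB lastC
  end.

Definition nacc (s : state) (n : nat) : nat := pairsum (fun u z => accepts s u z) n.

Lemma nacc_SW0 noC rightB : nacc (SW noC rightB) 0 = 0.
Proof. by rewrite /nacc /pairsum big_ord1 /= !big_seq1. Qed.

Lemma nacc_SZ0 needB lastC : nacc (SZ needB lastC) 0 = 1.
Proof. by rewrite /nacc /pairsum big_ord1 /= !big_seq1. Qed.

Lemma nacc_SW noC rightB n : nacc (SW noC rightB) n.+1 =
  nacc (SZ rightB false) n + nacc (SW false true) n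
  + (if noC || rightB then 0 else nacc (SW false false) n) + nacc (SW false false) n.
Proof.
rewrite /nacc pairsum_consl big1 // add0n /letters !big_cons big_nil addn0 !addnA.
congr (_ + _ + _ + _); case: ifP => noC_rightB; first rewrite -(pairsum0 n).
all: by apply: eq_pairsum => u z /=; rewrite ?eqxx ?letter_neq noC_rightB.
Qed.

Lemma nacc_SZ needB lastC n : nacc (SZ needB lastC) n.+1 =
  nacc (SW needB false) n + (if lastC then 0 else nacc (SZ false false) n)
  + nacc (SZ needB true) n + nacc (SZ needB false) n.
Proof.
rewrite /nacc pairsum_consr big_seq_cond big1 ?add0n; last first.
  by move=> u /andP[]; rewrite mem_words; case: u.
rewrite /letters !big_cons big_nil addn0 !addnA.
congr (_ + _ + _ + _); case: lastC; first rewrite -(pairsum0 n).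
all: by apply: eq_pairsum => u z /=; rewrite ?eqxx ?letter_neq.
Qed.

Lemma h_nacc n : h n.+1 = nacc (SW false false) n.
Proof.
case: n => [|n]; first by rewrite nacc_SW0.
rewrite /h /= (eq_bigr _ (fun k _ => card_good _ _)).
rewrite -/(pairsum (fun w z => good w z) n.+2) pairsum_consr big1 => [|u _]; last first.
  by rewrite good_accW.
rewrite /letters big_cons add0n big1_seq ?addn0 => [|y /andP[_]]; last first.
  rewrite !inE => yA; rewrite -(pairsum0 n.+1); apply: eq_pairsum => u z.
  by rewrite good_accW; case/or3P: yA => /eqP ->.
rewrite /nacc -(pairsum_revl (fun u z => accepts (SW false false) u z)).
by apply: eq_pairsum => u z; rewrite good_accW eqxx.
Qed.

(** * The recurrence *)

Lemma h_small : [/\ h 2 = 1, h 3 = 6, h 4 = 26, h 5 = 102 & h 6 = 386].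
Proof. by rewrite !h_nacc !(nacc_SW, nacc_SZ) /= !(nacc_SW0, nacc_SZ0). Qed.

(* The seven state counts obey the first-order system nacc_SW, nacc_SZ;
   eliminating all but one of them over six consecutive levels is linear
   arithmetic. *)
Lemma h_rec m :
  h (m + 7) + 22 * h (m + 5) + 14 * h (m + 3) + h (m + 1) =
  8 * h (m + 6) + 26 * h (m + 4) + 5 * h (m + 2).
Proof.
rewrite !addnS addn0 !h_nacc.
have level j := (nacc_SW false false j, nacc_SW false true j, nacc_SW true false j,
  nacc_SZ false false j, nacc_SZ false true j, nacc_SZ true false j, nacc_SZ true true j).
move: (level m) (level m.+1) (level m.+2) (level m.+3) (level m.+4) (level m.+4.+1) => /=.
by do 6 move=> [[[[[[? ?] ?] ?] ?] ?] ?]; lia.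
Qed.

Local Open Scope ring_scope.

Lemma big_Qcoef_trunc m (F : nat -> int) : (7 <= m)%N ->
  \sum_(k < m) Qcoef k * F k = \sum_(k < 7) Qcoef k * F k.
Proof.
move=> le7m; rewrite -!(big_mkord xpredT (fun k => Qcoef k * F k)).
rewrite (big_cat_nat _ le7m) //= [X in _ + X]big1_seq ?addr0 // => k.
by move=> /andP[_]; rewrite mem_iota => /andP[le7k _]; rewrite /Qcoef nth_default ?mul0r.
Qed.

Lemma h_conv_small n : (n <= 6)%N ->
  \sum_(k < n.+1) Qcoef k * (h (n - k))%:Z = Pcoef n.
Proof.
have [h0 h1] : h 0 = 0%N /\ h 1 = 0%N by [].
have [h2 h3 h4 h5 h6] := h_small.
case: n => [|[|[|[|[|[|[|n]]]]]]] //= _.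
all: rewrite !big_ord_recl big_ord0 /bump /= ?subn0 ?subSS /Qcoef /Pcoef /=.
all: by rewrite ?h0 ?h1 ?h2 ?h3 ?h4 ?h5 ?h6.
Qed.

Lemma h_conv_large m : \sum_(k < (m + 7).+1) Qcoef k * (h (m + 7 - k))%:Z = 0.
Proof.
rewrite (big_Qcoef_trunc (fun k => (h (m + 7 - k))%:Z)); last by lia.
rewrite !big_ord_recl big_ord0 /= /bump /= -!addnBA // !addn0 !add1n !subSS !subn0 /Qcoef /=.
by have := h_rec m; lia.
Qed.

Theorem theorem3p3 :
  forall n : nat,
    \sum_(k < n.+1) Qcoef k * (h (n - k))%:Z = Pcoef n.
Proof.
move=> n; have [n_small | n_large] := leqP n 6; first exact: h_conv_small.
by rewrite -(subnK n_large) h_conv_large /Pcoef nth_default //= addnC.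
Qed.
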